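(* Fix an instance of MCND and a partial aggregation $\mathcal{B}$ (see context). (i) If $(\bar x,\bar y)$ is a feasible solution of the LP relaxation of the DA formulation, then there exist values $z$ of the artificial variables such that $(x,y,z)$, with $x_{ij}^D=\sum_{k\in D}\bar x_{ij}^k$ for all $(i,j)\in\mathcal{A}$, $b\in\mathcal{B}$, $D\in\mathcal{G}_b^{ij}$, and $y_{ij}=\bar y_{ij}$ for all $(i,j)\in\mathcal{A}$, is a feasible solution of the LP relaxation of the PAe formulation built on $\mathcal{B}$; this solution has the same objective value as $(\bar x,\bar y)$. (ii) The converse fails in general: there exist an instance and a partial aggregation $\mathcal{B}$ for which the LP relaxation of PAe has a feasible solution $(x,y,z)$ such that there is no feasible solution $(\bar x,\bar y)$ of the LP relaxation of DA with $\bar y=y$ and $x_{ij}^D=\sum_{k\in D}\bar x_{ij}^k$ for all $(i,j),b,D$. (That is, DA is stronger than PAe.)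
   Context: An instance of MCND consists of a directed graph $G=(\mathcal{N},\mathcal{A})$, a finite set $\mathcal{K}$ of commodities, each $k\in\mathcal{K}$ having an origin $o^k\in\mathcal{N}$, a destination $s^k\in\mathcal{N}$ and a demand $d^k\ge 0$, and for each arc $(i,j)\in\mathcal{A}$ a capacity $u_{ij}$, a per-unit flow cost $c_{ij}$ and a fixed cost $f_{ij}$, all nonnegative. Let $o_i^k=1$ if $i=o^k$ and $0$ otherwise, $s_i^k=1$ if $i=s^k$ and $0$ otherwise, $\mathcal{N}_i^+=\{j:(i,j)\in\mathcal{A}\}$, $\mathcal{N}_i^-=\{j:(j,i)\in\mathcal{A}\}$. LP relaxation of DA: variables $x_{ij}^k\ge 0$ ($k\in\mathcal{K},(i,j)\in\mathcal{A}$) and $0\le y_{ij}\le 1$; minimize $\sum_{k}\sum_{(i,j)}c_{ij}x_{ij}^k+\sum_{(i,j)}f_{ij}y_{ij}$ subject to $\sum_{j\in\mathcal{N}_i^+}x_{ij}^k-\sum_{j\in\mathcal{N}_i^-}x_{ji}^k=(o_i^k-s_i^k)d^k$ for all $k,i$; $\sum_k x_{ij}^k\le u_{ij}y_{ij}$ for all $(i,j)$; $x_{ij}^k\le d^k y_{ij}$ for all $k,(i,j)$. Dispersion: a nonempty set $\mathcal{K}_b\subseteq\mathcal{K}$ of commodities sharing a common origin, together with, for every arc $(i,j)\in\mathcal{A}$, a partition of $\mathcal{K}_b$ into $\mathcal{K}_b^{ij}$ (commodities aggregated on $(i,j)$) and $\mathcal{D}_b^{ij}$ (commodities disaggregated on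 $(i,j)$); either part may be empty. Let $\mathcal{G}_b^{ij}$ be the family consisting of the set $\mathcal{K}_b^{ij}$ (if nonempty) together with the singletons $\{k\}$, $k\in\mathcal{D}_b^{ij}$. A partial aggregation is a set $\mathcal{B}$ of dispersions such that every $k\in\mathcal{K}$ lies in $\mathcal{K}_b$ for exactly one $b\in\mathcal{B}$. LP relaxation of PA (for $\mathcal{B}$): variables $x_{ij}^D\ge0$ for $(i,j)\in\mathcal{A}$, $b\in\mathcal{B}$, $D\in\mathcal{G}_b^{ij}$ (since the $\mathcal{K}_b$ are disjoint, $D$ determines $b$), and $0\le y_{ij}\le1$; minimize $\sum_{(i,j)}c_{ij}\sum_{b}\sum_{D\in\mathcal{G}_b^{ij}}x_{ij}^D+\sum_{(i,j)}f_{ij}y_{ij}$ subject to: for all $b\in\mathcal{B}$, $i\in\mathcal{N}$: $\sum_{j\in\mathcal{N}_i^+}\sum_{D\in\mathcal{G}_b^{ij}}x_{ij}^D-\sum_{j\in\mathcal{N}_i^-}\sum_{D\in\mathcal{G}_b^{ji}}x_{ji}^D=\sum_{k\in\mathcal{K}_b}(o_i^k-s_i^k)d^k$; for all $(i,j)$: $\sum_b\sum_{D\in\mathcal{G}_b^{ij}}x_{ij}^D\le u_{ij}y_{ij}$; for all $(i,j),b,D\in\mathcal{G}_b^{ij}$: $x_{ij}^D\le(\sum_{k\in D}d^k)y_{ij}$. LP relaxation of PAe: the PA LP plus the following. For $b\in\mathcal{B}$, $i\in\mathcal{N}$ let $\mathcal{L}_b^i=\{k\in\mathcal{K}_b:k\in\mathcal{D}_b^{ji}\text{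 for some }j\in\mathcal{N}_i^-\text{ or }k\in\mathcal{D}_b^{ij}\text{ for some }j\in\mathcal{N}_i^+\}$; $\mathcal{M}_b^i=\{\{k\}:k\in\mathcal{L}_b^i\}\cup\{\mathcal{K}_b\setminus\mathcal{L}_b^i\}$ (the last set only if nonempty); $\check{\mathcal{T}}_b^i$ = the set of distinct nonempty sets among $\{\mathcal{K}_b^{ji}:j\in\mathcal{N}_i^-\}$; $\hat{\mathcal{T}}_b^i$ = the set of distinct nonempty sets among $\{\mathcal{K}_b^{ij}:j\in\mathcal{N}_i^+\}$. For every $(b,i)$ with $\mathcal{L}_b^i\neq\emptyset$ add variables $z_{CD}^{ib}\ge0$ for $C\in\check{\mathcal{T}}_b^i$, $D\in\mathcal{M}_b^i$ with $C\cap D\ne\emptyset$, and $z_{DC}^{ib}\ge0$ for $D\in\mathcal{M}_b^i$, $C\in\hat{\mathcal{T}}_b^i$ with $C\cap D\neq\emptyset$ (these have zero cost), and constraints: for each $D\in\mathcal{M}_b^i$: $\sum_{j\in\mathcal{N}_i^+:\,D=\{k\},k\in\mathcal{D}_b^{ij}}x_{ij}^{D}-\sum_{j\in\mathcal{N}_i^-:\,D=\{k\},k\in\mathcal{D}_b^{ji}}x_{ji}^{D}+\sum_{C\in\hat{\mathcal{T}}_b^i:C\cap D\neq\emptyset}z_{DC}^{ib}-\sum_{C\in\check{\mathcal{T}}_b^i:C\cap D\ne\emptyset}z_{CD}^{ib}=\sum_{k\in D}(o_i^k-s_i^k)d^k$; for each $C\in\check{\mathcal{T}}_b^i$: $\sum_{D\in\mathcal{M}_b^i:C\cap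 D\ne\emptyset}z_{CD}^{ib}-\sum_{j\in\mathcal{N}_i^-:\mathcal{K}_b^{ji}=C}x_{ji}^C=0$; for each $C\in\hat{\mathcal{T}}_b^i$: $\sum_{j\in\mathcal{N}_i^+:\mathcal{K}_b^{ij}=C}x_{ij}^C-\sum_{D\in\mathcal{M}_b^i:C\cap D\neq\emptyset}z_{DC}^{ib}=0$. The objective is that of PA. *)

From HB Require Import structures.
From mathcomp Require Import all_boot all_order all_algebra.
Unset Printing Implicit Defensive.
Import Order.TTheory GRing.Theory Num.Theory.
Local Open Scope ring_scope.

(* An MCND instance: finite node set, is_arc relation (the is_arc set A, is_arc (i,j)
   present iff [is_arc i j]), is_arc data (capacity u, unit cost c, fixed cost f)
   and commodities with origin, destination, demand. *)
Record mcnd (R : realFieldType) := MCND {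
  node : finType;
  com : finType;
  is_arc : rel node;
  cap : node -> node -> R;
  ucost : node -> node -> R;
  fcost : node -> node -> R;
  orig : com -> node;
  dest : com -> node;
  dem : com -> R }.
Arguments node {R} _.
Arguments com {R} _.
Arguments is_arc {R} _ _ _.
Arguments cap {R} _ _ _.
Arguments ucost {R} _ _ _.
Arguments fcost {R} _ _ _.
Arguments orig {R} _ _.
Arguments dest {R} _ _.
Arguments dem {R} _ _.

Definition mcnd_wf {R : realFieldType} (I : mcnd R) : Prop :=
  irreflexive (is_arc I) /\
  (forall k, 0 <= dem I k) /\
  (forall i j, is_arc I i j -> [/\ 0 <= cap I i j, 0 <= ucost I i j & 0 <= fcost I i j]).

Definition supply {R : realFieldType} (I : mcnd R) (k : com I) (i : node I) : R :=
  (((i == orig I k)%:R - (i == dest I k)%:R) * dem I k).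

Definition DA_feasible {R : realFieldType} (I : mcnd R)
  (x : com I -> node I -> node I -> R) (y : node I -> node I -> R) : Prop :=
  (forall i j, is_arc I i j -> 0 <= y i j <= 1) /\
  (forall k i j, is_arc I i j -> 0 <= x k i j) /\
  (forall k i, \sum_(j | is_arc I i j) x k i j - \sum_(j | is_arc I j i) x k j i
               = supply I k i) /\
  (forall i j, is_arc I i j -> \sum_k x k i j <= cap I i j * y i j) /\
  (forall k i j, is_arc I i j -> x k i j <= dem I k * y i j).

Definition DA_obj {R : realFieldType} (I : mcnd R)
  (x : com I -> node I -> node I -> R) (y : node I -> node I -> R) : R :=
  \sum_i \sum_(j | is_arc I i j) (ucost I i j * \sum_k x k i j + fcost I i j * y i j).

(* A partial aggregation: a finite family of dispersions b, each with its
   commodity set K_b and, for each is_arc (i,j), the aggregated part K_b^{ij};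
   the disaggregated part is D_b^{ij} = K_b \ K_b^{ij}. *)
Record paggr {R : realFieldType} (I : mcnd R) := PAggr {
  disp : finType;
  Kb : disp -> {set com I};
  agg : disp -> node I -> node I -> {set com I} }.
Arguments disp {R I} _.
Arguments Kb {R I} _ _.
Arguments agg {R I} _ _ _ _.

Definition paggr_wf {R : realFieldType} {I : mcnd R} (B : paggr I) : Prop :=
  (forall b, Kb B b != set0) /\
  (forall b, {in Kb B b &, forall k k', orig I k = orig I k'}) /\
  (forall k, exists! b, k \in Kb B b) /\
  (forall b i j, is_arc I i j -> agg B b i j \subset Kb B b).

Section PAdefs.
Context {R : realFieldType} {I : mcnd R} (B : paggr I).

Definition Dis (b : disp B) (i j : node I) : {set com I} := Kb B b :\: agg B b i j.

Definition G (b : disp B) (i j : node I) : {set {set com I}} :=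
  (if agg B b i j == set0 then set0 else [set agg B b i j])
  :|: [set [set k] | k in Dis b i j].

Definition Lset (b : disp B) (i : node I) : {set com I} :=
  [set k in Kb B b | [exists j, (is_arc I j i && (k \in Dis b j i))
                               || (is_arc I i j && (k \in Dis b i j))]].

Definition M (b : disp B) (i : node I) : {set {set com I}} :=
  [set [set k] | k in Lset b i]
  :|: (if Kb B b :\: Lset b i == set0 then set0 else [set Kb B b :\: Lset b i]).

Definition Tin (b : disp B) (i : node I) : {set {set com I}} :=
  [set agg B b j i | j : node I & is_arc I j i && (agg B b j i != set0)].
Definition Tout (b : disp B) (i : node I) : {set {set com I}} :=
  [set agg B b i j | j : node I & is_arc I i j && (agg B b i j != set0)].

Definition meets (C D : {set com I}) : bool := C :&: D != set0.

(* x i j D is the variable x_{ij}^D (only meaningful for is_arc (i,j) and D in G_b^{ij}) *)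
Definition PA_feasible (x : node I -> node I -> {set com I} -> R)
  (y : node I -> node I -> R) : Prop :=
  (forall i j, is_arc I i j -> 0 <= y i j <= 1) /\
  (forall b i j D, is_arc I i j -> D \in G b i j -> 0 <= x i j D) /\
  (forall b i, \sum_(j | is_arc I i j) \sum_(D in G b i j) x i j D
             - \sum_(j | is_arc I j i) \sum_(D in G b j i) x j i D
             = \sum_(k in Kb B b) supply I k i) /\
  (forall i j, is_arc I i j ->
     \sum_b \sum_(D in G b i j) x i j D <= cap I i j * y i j) /\
  (forall b i j D, is_arc I i j -> D \in G b i j ->
     x i j D <= (\sum_(k in D) dem I k) * y i j).

Definition PA_obj (x : node I -> node I -> {set com I} -> R)
  (y : node I -> node I -> R) : R :=
  \sum_i \sum_(j | is_arc I i j)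
     (ucost I i j * \sum_b \sum_(D in G b i j) x i j D + fcost I i j * y i j).

(* zin b i C D is z_{CD}^{ib} (C in check-T, D in M),
   zout b i D C is z_{DC}^{ib} (D in M, C in hat-T). *)
Definition PAe_feasible (x : node I -> node I -> {set com I} -> R)
  (y : node I -> node I -> R)
  (zin : disp B -> node I -> {set com I} -> {set com I} -> R)
  (zout : disp B -> node I -> {set com I} -> {set com I} -> R) : Prop :=
  PA_feasible x y /\
  forall b i, Lset b i != set0 ->
   [/\ (forall C D, C \in Tin b i -> D \in M b i -> meets C D -> 0 <= zin b i C D),
       (forall D C, D \in M b i -> C \in Tout b i -> meets C D -> 0 <= zout b i D C),
       (forall D, D \in M b i ->
          \sum_(j | is_arc I i j && (D \in [set [set k] | k in Dis b i j])) x i j D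
          - \sum_(j | is_arc I j i && (D \in [set [set k] | k in Dis b j i])) x j i D
          + \sum_(C in Tout b i | meets C D) zout b i D C
          - \sum_(C in Tin b i | meets C D) zin b i C D
          = \sum_(k in D) supply I k i),
       (forall C, C \in Tin b i ->
          \sum_(D in M b i | meets C D) zin b i C D
          - \sum_(j | is_arc I j i && (agg B b j i == C)) x j i C = 0) &
       (forall C, C \in Tout b i ->
          \sum_(j | is_arc I i j && (agg B b i j == C)) x i j C
          - \sum_(D in M b i | meets C D) zout b i D C = 0)].

End PAdefs.

(* A DA solution is mapped to PAe by summing x over the blocks of G_b^{ij} and by
   letting z_{CD} carry the DA flow of the commodities of C :&: D.  Every block of M_b^i
   is a singleton or lies inside every aggregated set at i, so the PAe balance of a
   block D at i is the sum of the DA balances of the commodities of D, and the balance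
   of an aggregated block C is the sum of its DA flows split along the partition M_b^i.
   The converse fails on a source with two sinks, one commodity of demand 1 per sink,
   fully aggregated: y = 1/2 satisfies the aggregated linking constraint
   x^K <= (d^1 + d^2) y, but DA must send each whole demand along its own arc, which
   forces d^k y >= 1. *)

From HB Require Import structures.
From mathcomp Require Import all_boot all_order all_algebra.
From mathcomp Require Import lra.
Import Order.TTheory GRing.Theory Num.Theory.
Local Open Scope ring_scope.

Section AggregatedFamily.
Context {T N : finType}.

(* G_b^{ij} is agg_family K_b K_b^{ij}, and M_b^i is agg_family K_b (K_b :\: L_b^i). *)
Definition agg_family (K A : {set T}) : {set {set T}} :=
  (if A == set0 then set0 else [set A]) :|: [set [set k] | k in K :\: A].

Lemma big_agg_family (R : nmodType) (K A : {set T}) (F : T -> R) :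
  A \subset K -> \sum_(D in agg_family K A) \sum_(k in D) F k = \sum_(k in K) F k.
Proof.
move=> sAK.
have sum_singletons : \sum_(D in [set [set k] | k in K :\: A]) \sum_(k in D) F k
                      = \sum_(k in K :\: A) F k.
  rewrite big_imset /=; last by move=> k k' _ _; apply: set1_inj.
  by apply: eq_bigr => k _; rewrite big_set1.
rewrite /agg_family; case: eqP => [A0 | /eqP A0].
  by rewrite set0U sum_singletons A0 setD0.
rewrite big_setU1 /=; last first.
  apply/imsetP => -[k]; rewrite inE => /andP [kA _] eA.
  by move: kA; rewrite eA set11.
by rewrite sum_singletons [RHS](big_setID A) /= (setIidPr sAK).
Qed.

Lemma big_agg_family_meeting (R : nmodType) (K A C : {set T}) (F : T -> R) :
  A \subset K -> C \subset K ->
  \sum_(D in agg_family K A | C :&: D != set0) \sum_(k in C :&: D) F k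
  = \sum_(k in C) F k.
Proof.
move=> sAK sCK.
have restrict D : (if C :&: D != set0 then \sum_(k in C :&: D) F k else 0)
                  = \sum_(k in D) (if k \in C then F k else 0).
  rewrite -big_mkcondr; case: eqP => [CD0 | _] /=; last first.
    by apply: eq_bigl => k; rewrite in_setI andbC.
  apply/esym/big1 => k /andP [kD kC].
  by move/setP/(_ k): CD0; rewrite !inE kD kC.
rewrite big_mkcondr (eq_bigr _ (fun D _ => restrict D)).
rewrite big_agg_family // -big_mkcondr.
by apply: eq_bigl => k; rewrite andb_idl // => /(subsetP sCK).
Qed.

(* A block of agg_family K A' with A' \subset A is either inside A or a singleton outside A. *)
Lemma sum_singleton_block (K A A' D : {set T}) (R : nmodType) (F : T -> R) :
  A' \subset A -> D \in agg_family K A' ->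
  (if D \in [set [set k] | k in K :\: A] then \sum_(k in D) F k else 0)
  = \sum_(k in D :\: A) F k.
Proof.
move=> sA'A; rewrite /agg_family inE => /orP [DA' | /imsetP [k0 k0KA' ->]].
  have {DA'} -> : D = A' by move: DA'; case: ifP => _; rewrite ?inE // => /eqP.
  have -> : A' :\: A = set0 by apply/eqP; rewrite setD_eq0.
  rewrite big_set0; case: imsetP => // -[k]; rewrite inE => /andP [kA _] eA'.
  by move: kA; rewrite (subsetP sA'A) // eA' set11.
rewrite mem_imset; last exact: set1_inj.
rewrite inE (subsetP (subsetDl K A') _ k0KA') andbT.
case: ifP => k0A.
  rewrite (_ : [set k0] :\: A = [set k0]) //.
  by apply/setP => k; rewrite !inE andb_idl // => /eqP ->.
rewrite (_ : [set k0] :\: A = set0) ?big_set0 //.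
by apply/setP => k; rewrite !inE; case: eqP => [-> | _]; rewrite ?k0A ?andbF.
Qed.

Lemma sum_singleton_blocks {R : nmodType} {K A' D : {set T}} {P : pred N}
    {a : N -> {set T}} {f : N -> T -> R} :
  (forall j, P j -> A' \subset a j) -> D \in agg_family K A' ->
  \sum_(j | P j && (D \in [set [set k] | k in K :\: a j])) \sum_(k in D) f j k
  = \sum_(j | P j) \sum_(k in D :\: a j) f j k.
Proof.
move=> sA'a DA'; rewrite big_mkcondr; apply: eq_bigr => j Pj.
exact: sum_singleton_block (sA'a j Pj) DA'.
Qed.

Lemma sum_blocks_meeting (R : nmodType) (P : pred N) (a : N -> {set T})
    (f : N -> T -> R) (D : {set T}) :
  \sum_(C in [set a j | j : N & P j && (a j != set0)] | C :&: D != set0)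
     \sum_(j | P j && (a j == C)) \sum_(k in C :&: D) f j k
  = \sum_(j | P j) \sum_(k in a j :&: D) f j k.
Proof.
set S := [set a j | j : N & _].
have drop_meets C : (if C :&: D != set0 then \sum_(j | P j && (a j == C))
                       \sum_(k in C :&: D) f j k else 0)
                    = \sum_(j | P j && (a j == C)) \sum_(k in C :&: D) f j k.
  by case: eqP => // CD0; apply/esym/big1 => j _; rewrite CD0 big_set0.
rewrite big_mkcondr (eq_bigr _ (fun C _ => drop_meets C)).
rewrite [RHS](bigID (fun j => a j == set0)) /= [X in X + _]big1 ?add0r; last first.
  by move=> j /andP [_ /eqP ->]; rewrite set0I big_set0.
rewrite (partition_big a (mem S)) /=; last first.
  by move=> j /andP [Pj nz]; apply: imset_f; rewrite inE Pj nz.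
apply: eq_bigr => C /imsetP [j0]; rewrite inE => /andP [_ nz0] eC.
apply: eq_big => [j | j /andP [_ /eqP -> //]].
by case: eqP => [-> | _]; rewrite ?andbF // eC nz0 !andbT.
Qed.

Lemma big_setD_setI (R : nmodType) (A D : {set T}) (F : T -> R) :
  \sum_(k in D :\: A) F k + \sum_(k in A :&: D) F k = \sum_(k in D) F k.
Proof. by rewrite [RHS](big_setID A) setIC addrC. Qed.

Lemma sum_exact_cover (R : nmodType) (K : N -> {set T}) (F : T -> R) :
  (forall k, exists! b, k \in K b) ->
  \sum_b \sum_(k in K b) F k = \sum_k F k.
Proof.
move=> cover; under eq_bigr do rewrite big_mkcond /=.
rewrite exchange_big /=; apply: eq_bigr => k _.
have [b0 [kb0 uniq_b0]] := cover k.
rewrite (bigD1 b0) //= kb0 big1 ?addr0 // => b /negbTE nb.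
by case: ifP => // kb; rewrite (uniq_b0 b kb) eqxx in nb.
Qed.

End AggregatedFamily.

Section DisaggregatedToExtended.
Variables (R : realFieldType) (I : mcnd R) (B : paggr I).
Hypothesis agg_sub : forall b i j, is_arc I i j -> agg B b i j \subset Kb B b.
Hypothesis Kb_cover : forall k, exists! b, k \in Kb B b.
Variables (xb : com I -> node I -> node I -> R) (yb : node I -> node I -> R).
Hypothesis xb_feasible : DA_feasible I xb yb.

Definition agg_flow (i j : node I) (D : {set com I}) : R := \sum_(k in D) xb k i j.

Definition zin_flow (b : disp B) (i : node I) (C D : {set com I}) : R :=
  \sum_(j | is_arc I j i && (agg B b j i == C)) \sum_(k in C :&: D) xb k j i.
Definition zout_flow (b : disp B) (i : node I) (D C : {set com I}) : R :=
  \sum_(j | is_arc I i j && (agg B b i j == C)) \sum_(k in C :&: D) xb k i j.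

Lemma xb_ge0 k i j : is_arc I i j -> 0 <= xb k i j.
Proof. by case: xb_feasible => _ [xb0 _]; apply: xb0. Qed.

Lemma sum_DA_conservation (D : {set com I}) (i : node I) :
  \sum_(j | is_arc I i j) \sum_(k in D) xb k i j
  - \sum_(j | is_arc I j i) \sum_(k in D) xb k j i = \sum_(k in D) supply I k i.
Proof.
case: xb_feasible => _ [_ [cons _]].
by rewrite exchange_big [X in _ - X]exchange_big -sumrB; apply: eq_bigr => k _.
Qed.

Lemma G_agg_family b i j : G B b i j = agg_family (Kb B b) (agg B b i j).
Proof. by []. Qed.

Lemma sum_G_agg_flow b i j : is_arc I i j ->
  \sum_(D in G B b i j) agg_flow i j D = \sum_(k in Kb B b) xb k i j.
Proof. by move=> ij; rewrite G_agg_family big_agg_family ?agg_sub. Qed.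

Lemma sum_disp_G_agg_flow i j : is_arc I i j ->
  \sum_b \sum_(D in G B b i j) agg_flow i j D = \sum_k xb k i j.
Proof.
move=> ij; under eq_bigr do rewrite sum_G_agg_flow //.
exact: sum_exact_cover.
Qed.

Lemma PA_feasible_agg_flow : PA_feasible B agg_flow yb.
Proof.
case: xb_feasible => y01 [_ [_ [capacity linking]]].
split=> //; split.
  by move=> b i j D ij _; apply: sumr_ge0 => k _; apply: xb_ge0.
split.
  move=> b i; rewrite -sum_DA_conservation.
  by congr (_ - _); apply: eq_bigr => j; apply: sum_G_agg_flow.
split; first by move=> i j ij; rewrite sum_disp_G_agg_flow //; apply: capacity.
move=> b i j D ij _; rewrite mulr_suml; apply: ler_sum => k _; exact: linking.
Qed.

Lemma PA_obj_agg_flow : PA_obj B agg_flow yb = DA_obj I xb yb.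
Proof.
by apply: eq_bigr => i _; apply: eq_bigr => j ij; rewrite sum_disp_G_agg_flow.
Qed.

Section ExtendedNode.
Variables (b : disp B) (i : node I).

Lemma Lset_sub : Lset B b i \subset Kb B b.
Proof. by apply/subsetP => k; rewrite inE => /andP []. Qed.

Lemma M_agg_family : M B b i = agg_family (Kb B b) (Kb B b :\: Lset B b i).
Proof. by rewrite /M /agg_family setUC setDDr setDv set0U (setIidPr Lset_sub). Qed.

Lemma setD_Lset_sub_agg_out j : is_arc I i j -> Kb B b :\: Lset B b i \subset agg B b i j.
Proof.
move=> ij; apply/subsetP => k; rewrite !inE => /andP [kL kK].
apply: contraNT kL => kA; rewrite kK /=; apply/existsP; exists j.
by rewrite /Dis !inE kA kK ij orbT.
Qed.

Lemma setD_Lset_sub_agg_in j : is_arc I j i -> Kb B b :\: Lset B b i \subset agg B b j i.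
Proof.
move=> ji; apply/subsetP => k; rewrite !inE => /andP [kL kK].
apply: contraNT kL => kA; rewrite kK /=; apply/existsP; exists j.
by rewrite /Dis !inE kA kK ji.
Qed.

Lemma Tin_sub C : C \in Tin B b i -> C \subset Kb B b.
Proof. by case/imsetP => j; rewrite inE => /andP [ji _] ->; apply: agg_sub. Qed.

Lemma Tout_sub C : C \in Tout B b i -> C \subset Kb B b.
Proof. by case/imsetP => j; rewrite inE => /andP [ij _] ->; apply: agg_sub. Qed.

Lemma zin_conservation C : C \in Tin B b i ->
  \sum_(D in M B b i | meets C D) zin_flow b i C D
  - \sum_(j | is_arc I j i && (agg B b j i == C)) agg_flow j i C = 0.
Proof.
move=> CT; apply/eqP; rewrite subr_eq0 exchange_big /=; apply/eqP.
apply: eq_bigr => j _; rewrite M_agg_family big_agg_family_meeting //.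
  exact: subsetDl.
exact: Tin_sub.
Qed.

Lemma zout_conservation C : C \in Tout B b i ->
  \sum_(j | is_arc I i j && (agg B b i j == C)) agg_flow i j C
  - \sum_(D in M B b i | meets C D) zout_flow b i D C = 0.
Proof.
move=> CT; apply/eqP; rewrite subr_eq0 [X in _ == X]exchange_big /=; apply/eqP.
apply/esym/eq_bigr => j _; rewrite M_agg_family big_agg_family_meeting //.
  exact: subsetDl.
exact: Tout_sub.
Qed.

Lemma M_conservation D : D \in M B b i ->
  \sum_(j | is_arc I i j && (D \in [set [set k] | k in Dis B b i j])) agg_flow i j D
  - \sum_(j | is_arc I j i && (D \in [set [set k] | k in Dis B b j i])) agg_flow j i D
  + \sum_(C in Tout B b i | meets C D) zout_flow b i D C
  - \sum_(C in Tin B b i | meets C D) zin_flow b i C D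
  = \sum_(k in D) supply I k i.
Proof.
rewrite M_agg_family => DM.
rewrite /agg_flow /Dis /zout_flow /zin_flow /Tout /Tin /meets.
rewrite !(sum_singleton_blocks _ DM); first last.
- exact: setD_Lset_sub_agg_out.
- exact: setD_Lset_sub_agg_in.
rewrite !sum_blocks_meeting.
rewrite -addrA addrACA -opprD -!big_split /= -sum_DA_conservation.
by congr (_ - _); apply: eq_bigr => j _; rewrite big_setD_setI.
Qed.

End ExtendedNode.

Lemma DA_to_PAe_feasible :
  exists zin zout, PAe_feasible B agg_flow yb zin zout /\ PA_obj B agg_flow yb = DA_obj I xb yb.
Proof.
exists zin_flow, zout_flow; split; last exact: PA_obj_agg_flow.
split; first exact: PA_feasible_agg_flow.
move=> b i _; split.
- move=> C D _ _ _; apply: sumr_ge0 => j /andP [ji _].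
  by apply: sumr_ge0 => k _; apply: xb_ge0.
- move=> D C _ _ _; apply: sumr_ge0 => j /andP [ij _].
  by apply: sumr_ge0 => k _; apply: xb_ge0.
- exact: M_conservation.
- exact: zin_conservation.
- exact: zout_conservation.
Qed.

End DisaggregatedToExtended.

Section StarExample.
Variable R : realFieldType.

Definition star_mcnd : mcnd R :=
  @MCND R (option bool) bool [rel i j | (i == None) && (j != None)]
    (fun _ _ => 2) (fun _ _ => 0) (fun _ _ => 0) (fun _ => None) Some (fun _ => 1).

Definition star_full_aggregation : paggr star_mcnd :=
  @PAggr R star_mcnd unit (fun _ => setT) (fun _ _ _ => setT).

Lemma star_mcnd_wf : mcnd_wf star_mcnd.
Proof. by split=> [[] | ]; split=> // i j _; split; rewrite ?ler0n. Qed.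

Lemma star_full_aggregation_wf : paggr_wf star_full_aggregation.
Proof.
split; first by move=> b; apply/set0Pn; exists true; rewrite inE.
split=> //; split=> [k | b i j _]; last exact: subsetT.
by exists tt; split=> [| [] _]; rewrite ?inE.
Qed.

Lemma sum_star_in (F : option bool -> R) (k : bool) :
  \sum_(j | is_arc star_mcnd j (Some k)) F j = F None.
Proof. by rewrite (big_pred1 None) // => j; rewrite /= andbT. Qed.

Lemma sum_star_out (F : option bool -> R) :
  \sum_(j | is_arc star_mcnd None j) F j = F (Some true) + F (Some false).
Proof.
rewrite (bigD1 (Some true)) // (bigD1 (Some false)) //=.
by rewrite big_pred0 ?addr0 // => -[[]|].
Qed.

Lemma sum_star_leaf_out (F : option bool -> R) (k : bool) :
  \sum_(j | is_arc star_mcnd (Some k) j) F j = 0.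
Proof. by rewrite big_pred0. Qed.

Lemma sum_star_root_in (F : option bool -> R) :
  \sum_(j | is_arc star_mcnd j None) F j = 0.
Proof. by rewrite big_pred0 // => j; rewrite /= andbF. Qed.

Lemma sum_star_com (F : bool -> R) : \sum_(k in [set: bool]) F k = F true + F false.
Proof. by rewrite (eq_bigl predT) ?big_bool // => k; rewrite inE. Qed.

Lemma G_star b i j : G star_full_aggregation b i j = [set setT].
Proof.
rewrite G_agg_family /agg_family /= setDv imset0 setU0.
by case: eqP => // /setP/(_ true); rewrite !inE.
Qed.

Lemma Lset_star b i : Lset star_full_aggregation b i = set0.
Proof.
apply/setP => k; rewrite !inE; apply/negbTE/existsP => -[j].
by rewrite /Dis /= setDv !inE !andbF.
Qed.

Lemma star_PAe_feasible :
  PAe_feasible star_full_aggregation (fun _ _ _ => 1) (fun _ _ => 1 / 2)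
    (fun _ _ _ _ => 0) (fun _ _ _ _ => 0).
Proof.
split; last by move=> b i; rewrite Lset_star eqxx.
split; first by move=> i j _; apply/andP; split; lra.
split; first by move=> *; exact: ler01.
split.
  move=> b i; under eq_bigr do rewrite G_star big_set1.
  under [X in _ - X]eq_bigr do rewrite G_star big_set1.
  rewrite sum_star_com /supply; case: i => [k |].
    by rewrite sum_star_in sum_star_leaf_out; case: k => /=; lra.
  by rewrite sum_star_out sum_star_root_in /=; lra.
split.
  move=> i j _; rewrite (big_pred1 tt) => [| [] //].
  by rewrite G_star big_set1 /=; lra.
by move=> b i j D _; rewrite G_star inE => /eqP ->; rewrite sum_star_com /=; lra.
Qed.

Lemma star_DA_design_ge1 (xb : bool -> option bool -> option bool -> R) yb (k : bool) :
  DA_feasible star_mcnd xb yb -> 1 <= yb None (Some k).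
Proof.
case=> _ [_ [cons [_ link]]].
have at_leaf := cons k (Some (~~ k)); have at_root := cons k None.
rewrite sum_star_in sum_star_leaf_out /supply /= in at_leaf.
rewrite sum_star_out sum_star_root_in /supply /= in at_root.
have := link k None (Some k) isT.
by case: k at_leaf at_root => /=; lra.
Qed.

End StarExample.

Theorem theorem1 (R : realFieldType) :
  (* (i) DA-feasible solutions map to PAe-feasible ones with the same cost *)
  (forall (I : mcnd R) (B : paggr I), mcnd_wf I -> paggr_wf B ->
     forall (xb : com I -> node I -> node I -> R) (yb : node I -> node I -> R),
       DA_feasible I xb yb ->
       exists (zin zout : disp B -> node I -> {set com I} -> {set com I} -> R),
         PAe_feasible B (fun i j D => \sum_(k in D) xb k i j) yb zin zout /\
         PA_obj B (fun i j D => \sum_(k in D) xb k i j) yb = DA_obj I xb yb) /\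
  (* (ii) the converse fails in general *)
  (exists (I : mcnd R) (B : paggr I), mcnd_wf I /\ paggr_wf B /\
     exists (x : node I -> node I -> {set com I} -> R) (y : node I -> node I -> R)
            (zin zout : disp B -> node I -> {set com I} -> {set com I} -> R),
       PAe_feasible B x y zin zout /\
       ~ (exists (xb : com I -> node I -> node I -> R) (yb : node I -> node I -> R),
            DA_feasible I xb yb /\
            (forall i j, is_arc I i j -> yb i j = y i j) /\
            (forall b i j D, is_arc I i j -> D \in G B b i j ->
               x i j D = \sum_(k in D) xb k i j))).
Proof.
split.
  move=> I B _ [_ [_ [Kb_cover agg_sub]]] xb yb xb_feasible.
  exact: DA_to_PAe_feasible.
exists (star_mcnd R), (star_full_aggregation R).
split; first exact: star_mcnd_wf.
split; first exact: star_full_aggregation_wf.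
exists (fun _ _ _ => 1), (fun _ _ => 1 / 2), (fun _ _ _ _ => 0), (fun _ _ _ _ => 0).
split; first exact: star_PAe_feasible.
case=> xb [yb [xb_feasible [y_eq _]]].
have := star_DA_design_ge1 R xb yb true xb_feasible.
by rewrite y_eq //=; lra.
Qed.
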